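(* Let $\star$ be a Weyl star product on $C^\infty(\mathbb R^N)[[\alpha]]$ that is weakly Hermitian and satisfies the stability of unity. Then $\star$ is weakly alternative: for all coordinate indices $i,j,k$, $$x^i\star(x^j\star x^k)-(x^i\star x^j)\star x^k=\tfrac16[x^i,x^j,x^k].$$ More precisely, the associator $A(x^i,x^j,x^k)$ is antisymmetric under exchange of any two of its arguments.
   Context: Work on $\mathbb R^N$ with real coordinates $x^1,\dots,x^N$. Functions are complex-valued smooth functions on $\mathbb R^N$. A star product is a $\mathbb C[[\alpha]]$-bilinear map on $C^\infty(\mathbb R^N)[[\alpha]]$ (formal power series in the real formal parameter $\alpha$). On functions it is given by $f\star g=fg+\sum_{r\ge1}(i\alpha)^rC_r(f,g)$, where the $C_r$ are bilinear bidifferential operators. Complex conjugation ${}^*$ acts coefficientwise on formal series in $\alpha$. Notation: - The associator is $A(f,g,h)=f\star(g\star h)-(f\star g)\star h$. - The star commutator is $[f,g]=f\star g-g\star f$. - The star Jacobiator is $[f,g,h]=[f,[g,h]]+[h,[f,g]]+[g,[h,f]]$. Definitions: - Weyl star product: for every $n\ge1$, all indices $i_1,\dots,i_n$ and all $f$, $$(x^{i_1}\cdots x^{i_n})\star f=\frac1{n!}\sum_{\sigma\in S_n}x^{i_{\sigma(1)}}\star\big(x^{i_{\sigma(2)}}\star(\cdots\star(x^{i_{\sigma(n)}}\star f)\cdots)\big),$$ where $x^{i_1}\cdots x^{i_n}$ denotes the ordinary product. - Weakly Hermitian: $(x^j\star f)^*=f^*\star x^j$ for all $j$ and all $f$. -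 Stability of unity: $f\star1=1\star f=f$ for all $f$. *)

From Stdlib Require Import Reals List Arith.
Import ListNotations.
Open Scope R_scope.

Definition Cx := (R * R)%type.
Definition Cre (r : R) : Cx := (r, 0).
Definition C0 : Cx := Cre 0.
Definition C1 : Cx := Cre 1.
Definition Ci : Cx := (0, 1).
Definition Cadd (a b : Cx) : Cx := (fst a + fst b, snd a + snd b).
Definition Copp (a : Cx) : Cx := (- fst a, - snd a).
Definition Cmul (a b : Cx) : Cx :=
  (fst a * fst b - snd a * snd b, fst a * snd b + snd a * fst b).
Definition Cconj (a : Cx) : Cx := (fst a, - snd a).
Fixpoint Cpow (a : Cx) (n : nat) : Cx :=
  match n with O => C1 | S n => Cmul a (Cpow a n) end.
Fixpoint Csum (n : nat) (g : nat -> Cx) : Cx :=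
  match n with O => C0 | S n => Cadd (Csum n g) (g n) end.

Definition idx (N : nat) := {i : nat | (i < N)%nat}.
Definition pt (N : nat) := idx N -> R.
Definition fn (N : nat) := pt N -> Cx.

Definition upd {N} (x : pt N) (i : idx N) (t : R) : pt N :=
  fun j => if Nat.eq_dec (proj1_sig j) (proj1_sig i) then t else x j.

Definition has_partial {N} (i : idx N) (f g : fn N) : Prop :=
  forall x : pt N,
    derivable_pt_lim (fun t => fst (f (upd x i t))) (x i) (fst (g x)) /\
    derivable_pt_lim (fun t => snd (f (upd x i t))) (x i) (snd (g x)).

(** [diff_along [i1;...;ik] f g] : g = d_{ik} ... d_{i1} f *)
Inductive diff_along {N} : list (idx N) -> fn N -> fn N -> Prop :=
| da_nil f : diff_along nil f f
| da_cons i l f h g : has_partial i f h -> diff_along l h g -> diff_along (i :: l) f g.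

Definition smooth {N} (f : fn N) : Prop := forall l, exists g, diff_along l f g.

(** B is a bidifferential operator (finite order, smooth complex coefficients):
    B(f,g) = sum_t c_t * (d^{a_t} f) * (d^{b_t} g) on smooth functions. *)
Definition bidiff {N} (B : fn N -> fn N -> fn N) : Prop :=
  exists T : list (fn N * list (idx N) * list (idx N)),
    (forall t, In t T -> smooth (fst (fst t))) /\
    forall (f g : fn N) (Df Dg : list (idx N) -> fn N),
      smooth f -> smooth g ->
      (forall l, diff_along l f (Df l)) -> (forall l, diff_along l g (Dg l)) ->
      forall x, B f g x =
        fold_right (fun t acc =>
          Cadd (Cmul (fst (fst t) x) (Cmul (Df (snd (fst t)) x) (Dg (snd t) x))) acc)
          C0 T.

Definition ser (N : nat) := nat -> fn N.

Definition fmul {N} (f g : fn N) : fn N := fun x => Cmul (f x) (g x).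
Definition fconj {N} (f : fn N) : fn N := fun x => Cconj (f x).
Definition coord {N} (i : idx N) : fn N := fun x => Cre (x i).
Definition fone {N} : fn N := fun _ => C1.

Definition cst {N} (f : fn N) : ser N :=
  fun n => match n with O => f | S _ => fun _ => C0 end.

Definition sadd {N} (F G : ser N) : ser N := fun n x => Cadd (F n x) (G n x).
Definition sopp {N} (F : ser N) : ser N := fun n x => Copp (F n x).
Definition ssub {N} (F G : ser N) : ser N := sadd F (sopp G).
Definition sscale {N} (c : Cx) (F : ser N) : ser N := fun n x => Cmul c (F n x).
Definition sconj {N} (F : ser N) : ser N := fun n x => Cconj (F n x).
Definition szero {N} : ser N := fun _ _ => C0.
Definition ssum {N} (l : list (ser N)) : ser N := fold_right sadd szero l.

(** C_0 is the pointwise product; C r for r >= 1 are the given cochains *)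
Definition Cfull {N} (C : nat -> fn N -> fn N -> fn N) (r : nat) : fn N -> fn N -> fn N :=
  match r with O => fmul | S _ => C r end.

(** The star product determined by (C_r): f * g = sum_r (i alpha)^r C_r(f,g),
    extended C[[alpha]]-bilinearly:
    (F * G)_n = sum_{r + a + b = n} i^r C_r(F_a, G_b). *)
Definition star {N} (C : nat -> fn N -> fn N -> fn N) (F G : ser N) : ser N :=
  fun n x =>
    Csum (S n) (fun r =>
      Cmul (Cpow Ci r)
        (Csum (S (n - r)) (fun a => Cfull C r (F a) (G (n - r - a)%nat) x))).

Definition assoc {N} C (F G H : ser N) : ser N :=
  ssub (star C F (star C G H)) (star C (star C F G) H).
Definition comm {N} C (F G : ser N) : ser N := ssub (star C F G) (star C G F).
Definition jacobiator {N} C (F G H : ser N) : ser N :=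
  sadd (sadd (comm C F (comm C G H)) (comm C H (comm C F G))) (comm C G (comm C H F)).

Fixpoint mono {N} (l : list (idx N)) : fn N :=
  match l with nil => fone | i :: l => fmul (coord i) (mono l) end.

Fixpoint nest {N} C (l : list (idx N)) (G : ser N) : ser N :=
  match l with nil => G | i :: l => star C (cst (coord i)) (nest C l G) end.

Fixpoint inserts {A} (x : A) (l : list A) : list (list A) :=
  match l with
  | nil => [[x]]
  | y :: l' => (x :: y :: l') :: map (cons y) (inserts x l')
  end.
Fixpoint perms {A} (l : list A) : list (list A) :=
  match l with nil => [nil] | x :: l' => flat_map (inserts x) (perms l') end.

Definition weyl {N} (C : nat -> fn N -> fn N -> fn N) : Prop :=
  forall (l : list (idx N)), (1 <= length l)%nat ->
  forall f : fn N, smooth f ->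
    star C (cst (mono l)) (cst f) =
    sscale (Cre (/ INR (fact (length l))))
      (ssum (map (fun p => nest C p (cst f)) (perms l))).

Definition weakly_hermitian {N} (C : nat -> fn N -> fn N -> fn N) : Prop :=
  forall (j : idx N) (f : fn N), smooth f ->
    sconj (star C (cst (coord j)) (cst f)) = star C (cst (fconj f)) (cst (coord j)).

Definition stable_unity {N} (C : nat -> fn N -> fn N -> fn N) : Prop :=
  forall f : fn N, smooth f ->
    star C (cst f) (cst fone) = cst f /\ star C (cst fone) (cst f) = cst f.

(* Write [p q r] for x^p * (x^q * x^r).  Weak hermiticity, used twice, turns
   (x^p * x^q) * x^r into the conjugate of [r q p], so that
   A(x^p, x^q, x^r) = [p q r] - conj [r q p], and the Jacobiator is likewise a
   combination of the [p q r] and their conjugates.  The Weyl property in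
   degree two gives (x^p x^q) * x^r = ([p q r] + [q p r]) / 2; hermiticity
   rewrites the left side as conj (x^r * (x^p x^q)), and the Weyl property
   with stability of unity, x^p x^q = (x^p * x^q + x^q * x^p) / 2, expands
   this to conj ([r p q] + [r q p]) / 2.
   These relations alone force A to be totally antisymmetric and equal to one
   sixth of the Jacobiator. *)

From Pilot Require Import Defs.
From Stdlib Require Import Reals List Lra Lia Factorial.
From Stdlib Require Import ProofIrrelevance FunctionalExtensionality IndefiniteDescription.
Import ListNotations.
Open Scope R_scope.

Lemma Cx_eq (p q : Cx) : fst p = fst q -> snd p = snd q -> p = q.
Proof. destruct p, q; simpl; intros; subst; reflexivity. Qed.

(* Real linear combinations suffice: the cochains are only ever used
   R-bilinearly below. *)
Definition Crlin (a b : R) (p q : Cx) : Cx := (a * fst p + b * fst q, a * snd p + b * snd q).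
Definition frlin {N} (a b : R) (v w : fn N) : fn N := fun x => Crlin a b (v x) (w x).
Definition srlin {N} (a b : R) (F G : ser N) : ser N := fun n => frlin a b (F n) (G n).

(* Unqualified, [C1] would denote the binomial coefficient of Stdlib Reals. *)
Ltac Cx_ring :=
  apply Cx_eq; unfold frlin, Crlin, Cadd, Copp, Cmul, Cconj, Cre, C0, Defs.C1; simpl; ring.

Lemma Cmul_C0 c : Cmul c C0 = C0.
Proof. Cx_ring. Qed.

Lemma Cmul_Crlin c a b p q : Cmul c (Crlin a b p q) = Crlin a b (Cmul c p) (Cmul c q).
Proof. Cx_ring. Qed.

Lemma Csum_ext n (f g : nat -> Cx) : (forall k, f k = g k) -> Csum n f = Csum n g.
Proof. intro H; induction n as [|n IH]; simpl; [reflexivity | now rewrite IH, H]. Qed.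

Lemma Csum_Crlin n a b (f g : nat -> Cx) :
  Csum n (fun k => Crlin a b (f k) (g k)) = Crlin a b (Csum n f) (Csum n g).
Proof. induction n as [|n IH]; simpl; [|rewrite IH]; Cx_ring. Qed.

Lemma Cconj_Csum n (f : nat -> Cx) : Cconj (Csum n f) = Csum n (fun k => Cconj (f k)).
Proof. induction n as [|n IH]; simpl; [|rewrite <- IH]; Cx_ring. Qed.

Lemma Csum_zero n (g : nat -> Cx) : (forall k, (k < n)%nat -> g k = C0) -> Csum n g = C0.
Proof.
  induction n as [|n IH]; intro H; simpl; [reflexivity|].
  rewrite IH by (intros; apply H; lia). rewrite H by lia. Cx_ring.
Qed.

Lemma Csum_last m (g : nat -> Cx) :
  (forall k, (k < m)%nat -> g k = C0) -> Csum (S m) g = g m.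
Proof. intro H; simpl; rewrite Csum_zero by exact H; Cx_ring. Qed.

Lemma Csum_first m (g : nat -> Cx) :
  (forall k, (1 <= k)%nat -> g k = C0) -> Csum (S m) g = g O.
Proof.
  intro H; induction m as [|m IH].
  - simpl; Cx_ring.
  - change (Csum (S (S m)) g) with (Cadd (Csum (S m) g) (g (S m))).
    rewrite IH, (H (S m)) by lia. Cx_ring.
Qed.

(** * Smooth functions *)

Lemma upd_same {N} (x : pt N) (i : idx N) : upd x i (x i) = x.
Proof.
  extensionality j; unfold upd.
  destruct (Nat.eq_dec _ _) as [e|]; [|reflexivity].
  destruct i as [i hi], j as [j hj]; simpl in e; subst.
  do 2 f_equal; apply proof_irrelevance.
Qed.

Lemma derivable_pt_lim_eq_value f x l l' :
  derivable_pt_lim f x l -> l = l' -> derivable_pt_lim f x l'.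
Proof. now intros ? <-. Qed.

Lemma has_partial_unique {N} (i : idx N) f h1 h2 :
  has_partial i f h1 -> has_partial i f h2 -> h1 = h2.
Proof.
  intros H1 H2; extensionality x.
  destruct (H1 x), (H2 x); apply Cx_eq; eapply uniqueness_limite; eauto.
Qed.

Lemma has_partial_frlin {N} (i : idx N) a b v w dv dw :
  has_partial i v dv -> has_partial i w dw ->
  has_partial i (frlin a b v w) (frlin a b dv dw).
Proof.
  intros Hv Hw x; destruct (Hv x) as [Hv1 Hv2], (Hw x) as [Hw1 Hw2]; split.
  - exact (derivable_pt_lim_plus _ _ _ _ _
      (derivable_pt_lim_scal _ a _ _ Hv1) (derivable_pt_lim_scal _ b _ _ Hw1)).
  - exact (derivable_pt_lim_plus _ _ _ _ _
      (derivable_pt_lim_scal _ a _ _ Hv2) (derivable_pt_lim_scal _ b _ _ Hw2)).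
Qed.

Lemma has_partial_fmul {N} (i : idx N) f g df dg :
  has_partial i f df -> has_partial i g dg ->
  has_partial i (fmul f g) (frlin 1 1 (fmul df g) (fmul f dg)).
Proof.
  intros Hf Hg x; destruct (Hf x) as [Hf1 Hf2], (Hg x) as [Hg1 Hg2].
  pose proof (derivable_pt_lim_mult _ _ _ _ _ Hf1 Hg1) as D11.
  pose proof (derivable_pt_lim_mult _ _ _ _ _ Hf1 Hg2) as D12.
  pose proof (derivable_pt_lim_mult _ _ _ _ _ Hf2 Hg1) as D21.
  pose proof (derivable_pt_lim_mult _ _ _ _ _ Hf2 Hg2) as D22.
  cbv beta in D11, D12, D21, D22; rewrite !upd_same in D11, D12, D21, D22.
  split; eapply derivable_pt_lim_eq_value.
  - exact (derivable_pt_lim_minus _ _ _ _ _ D11 D22).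
  - simpl; ring.
  - exact (derivable_pt_lim_plus _ _ _ _ _ D12 D21).
  - simpl; ring.
Qed.

Lemma diff_along_cons_inv {N} (i : idx N) l f g :
  diff_along (i :: l) f g -> exists h, has_partial i f h /\ diff_along l h g.
Proof. intro H; inversion H; subst; eauto. Qed.

Lemma diff_along_frlin {N} l : forall (v w dv dw : fn N) a b,
  diff_along l v dv -> diff_along l w dw -> diff_along l (frlin a b v w) (frlin a b dv dw).
Proof.
  induction l as [|i l IH]; intros v w dv dw a b Hv Hw.
  - inversion Hv; inversion Hw; subst; constructor.
  - inversion Hv; inversion Hw; subst.
    econstructor; [apply has_partial_frlin; eauto | apply IH; auto].
Qed.

Lemma diff_along_fconj {N} l : forall (f g : fn N),
  diff_along l f g -> diff_along l (fconj f) (fconj g).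
Proof.
  induction l as [|i l IH]; intros f g H; inversion H; subst; [constructor|].
  econstructor; [|apply IH; eauto].
  intro x; destruct (H2 x) as [D1 D2]; split; [exact D1 | exact (derivable_pt_lim_opp _ _ _ D2)].
Qed.

Lemma smooth_partial {N} (i : idx N) f h : smooth f -> has_partial i f h -> smooth h.
Proof.
  intros Hs Hp l; destruct (Hs (i :: l)) as [g Hg].
  destruct (diff_along_cons_inv _ _ _ _ Hg) as [h' [Hh' Hd]].
  exists g; rewrite <- (has_partial_unique _ _ _ _ Hh' Hp); exact Hd.
Qed.

Lemma smooth_diff_along {N} l : forall (f g : fn N), smooth f -> diff_along l f g -> smooth g.
Proof.
  induction l as [|i l IH]; intros f g Hs Hd.
  - inversion Hd; subst; exact Hs.
  - destruct (diff_along_cons_inv _ _ _ _ Hd) as [h [Hp Hd']].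
    exact (IH h g (smooth_partial _ _ _ Hs Hp) Hd').
Qed.

Lemma smooth_derivatives {N} (f : fn N) :
  smooth f -> exists D : list (idx N) -> fn N, forall l, diff_along l f (D l).
Proof. exact (functional_choice _). Qed.

Lemma smooth_ext {N} (f g : fn N) : smooth f -> (forall x, f x = g x) -> smooth g.
Proof. intros H E; replace g with f; [exact H | extensionality x; apply E]. Qed.

Lemma smooth_frlin {N} (v w : fn N) a b : smooth v -> smooth w -> smooth (frlin a b v w).
Proof.
  intros Hv Hw l; destruct (Hv l), (Hw l); eexists; apply diff_along_frlin; eauto.
Qed.

Lemma smooth_Cadd {N} (f g : fn N) : smooth f -> smooth g -> smooth (fun x => Cadd (f x) (g x)).
Proof.
  intros Hf Hg; apply (smooth_ext _ _ (smooth_frlin f g 1 1 Hf Hg)); intro x; Cx_ring.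
Qed.

Lemma smooth_const {N} (c : Cx) : smooth (fun _ : pt N => c).
Proof.
  intro l; revert c; induction l as [|i l IH]; intro c.
  - eexists; constructor.
  - destruct (IH C0) as [g Hg].
    exists g; econstructor; [|exact Hg].
    intro x; split; apply derivable_pt_lim_const.
Qed.

Lemma smooth_coord {N} (m : idx N) : smooth (coord m).
Proof.
  intros [|i l]; [eexists; constructor|].
  destruct (smooth_const (N := N)
    (Cre (if Nat.eq_dec (proj1_sig m) (proj1_sig i) then 1 else 0)) l) as [g Hg].
  exists g; econstructor; [|exact Hg].
  intro x; split; simpl; unfold upd.
  - destruct (Nat.eq_dec _ _); [apply derivable_pt_lim_id | apply derivable_pt_lim_const].
  - apply derivable_pt_lim_const.
Qed.

Lemma smooth_fmul {N} (f g : fn N) : smooth f -> smooth g -> smooth (fmul f g).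
Proof.
  intros Hf Hg l; revert f g Hf Hg; induction l as [|i l IH]; intros f g Hf Hg.
  - eexists; constructor.
  - destruct (Hf [i]) as [u Hu], (Hg [i]) as [v Hv].
    destruct (diff_along_cons_inv _ _ _ _ Hu) as [df [Hdf _]].
    destruct (diff_along_cons_inv _ _ _ _ Hv) as [dg [Hdg _]].
    destruct (IH df g (smooth_partial _ _ _ Hf Hdf) Hg) as [p1 Hp1].
    destruct (IH f dg Hf (smooth_partial _ _ _ Hg Hdg)) as [p2 Hp2].
    exists (frlin 1 1 p1 p2); econstructor;
      [apply has_partial_fmul; eauto | apply diff_along_frlin; eauto].
Qed.

Lemma smooth_fconj {N} (f : fn N) : smooth f -> smooth (fconj f).
Proof. intros H l; destruct (H l); eexists; apply diff_along_fconj; eauto. Qed.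

Lemma smooth_Csum {N} n (g : nat -> fn N) :
  (forall k, smooth (g k)) -> smooth (fun x => Csum n (fun k => g k x)).
Proof.
  intro H; induction n as [|n IH]; simpl; [apply smooth_const | apply smooth_Cadd; auto].
Qed.

Lemma smooth_Cmul_l {N} c (f : fn N) : smooth f -> smooth (fun x => Cmul c (f x)).
Proof. apply (smooth_fmul (fun _ => c)), smooth_const. Qed.

(** * Bidifferential operators *)

Definition bidiff_sum {N} (T : list (fn N * list (idx N) * list (idx N)))
  (Df Dg : list (idx N) -> fn N) (x : pt N) : Cx :=
  fold_right (fun t acc =>
    Cadd (Cmul (fst (fst t) x) (Cmul (Df (snd (fst t)) x) (Dg (snd t) x))) acc) C0 T.

Lemma bidiff_sum_frlin_l {N} T (Du Dv Dw : list (idx N) -> fn N) a b x :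
  bidiff_sum T (fun l => frlin a b (Du l) (Dv l)) Dw x =
  Crlin a b (bidiff_sum T Du Dw x) (bidiff_sum T Dv Dw x).
Proof. unfold bidiff_sum; induction T as [|t T IH]; simpl; [|rewrite IH]; Cx_ring. Qed.

Lemma bidiff_sum_frlin_r {N} T (Du Dv Dw : list (idx N) -> fn N) a b x :
  bidiff_sum T Du (fun l => frlin a b (Dv l) (Dw l)) x =
  Crlin a b (bidiff_sum T Du Dv x) (bidiff_sum T Du Dw x).
Proof. unfold bidiff_sum; induction T as [|t T IH]; simpl; [|rewrite IH]; Cx_ring. Qed.

Lemma smooth_bidiff_sum {N} T (Df Dg : list (idx N) -> fn N) :
  (forall t, In t T -> smooth (fst (fst t))) ->
  (forall l, smooth (Df l)) -> (forall l, smooth (Dg l)) ->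
  smooth (bidiff_sum T Df Dg).
Proof.
  intros Hc Hf Hg; induction T as [|t T IH]; unfold bidiff_sum; simpl.
  - apply smooth_const.
  - apply smooth_Cadd.
    + apply smooth_fmul; [apply Hc; left; reflexivity | apply smooth_fmul; auto].
    + apply IH; intros; apply Hc; right; assumption.
Qed.

Section Bidiff.
Variables (N : nat) (B : fn N -> fn N -> fn N).
Hypothesis HB : bidiff B.

Lemma bidiff_smooth u v : smooth u -> smooth v -> smooth (B u v).
Proof.
  destruct HB as [T [Hc HT]]; intros Hu Hv.
  destruct (smooth_derivatives u Hu) as [Du HDu], (smooth_derivatives v Hv) as [Dv HDv].
  apply (smooth_ext (bidiff_sum T Du Dv)); [|intro x; symmetry; apply HT; auto].
  apply smooth_bidiff_sum; auto; intro l.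
  - exact (smooth_diff_along l u (Du l) Hu (HDu l)).
  - exact (smooth_diff_along l v (Dv l) Hv (HDv l)).
Qed.

Lemma bidiff_frlin_l u v w a b : smooth u -> smooth v -> smooth w ->
  forall x, B (frlin a b u v) w x = Crlin a b (B u w x) (B v w x).
Proof.
  destruct HB as [T [_ HT]]; intros Hu Hv Hw x.
  destruct (smooth_derivatives u Hu) as [Du HDu], (smooth_derivatives v Hv) as [Dv HDv],
    (smooth_derivatives w Hw) as [Dw HDw].
  rewrite (HT _ _ (fun l => frlin a b (Du l) (Dv l)) Dw), (HT u w Du Dw), (HT v w Dv Dw);
    auto using smooth_frlin, diff_along_frlin.
  exact (bidiff_sum_frlin_l T Du Dv Dw a b x).
Qed.

Lemma bidiff_frlin_r u v w a b : smooth u -> smooth v -> smooth w ->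
  forall x, B u (frlin a b v w) x = Crlin a b (B u v x) (B u w x).
Proof.
  destruct HB as [T [_ HT]]; intros Hu Hv Hw x.
  destruct (smooth_derivatives u Hu) as [Du HDu], (smooth_derivatives v Hv) as [Dv HDv],
    (smooth_derivatives w Hw) as [Dw HDw].
  rewrite (HT _ _ Du (fun l => frlin a b (Dv l) (Dw l))), (HT u v Du Dv), (HT u w Du Dw);
    auto using smooth_frlin, diff_along_frlin.
  exact (bidiff_sum_frlin_r T Du Dv Dw a b x).
Qed.

End Bidiff.

(** * The star product on smooth series *)

Definition ssmooth {N} (F : ser N) : Prop := forall n, smooth (F n).

Lemma ssmooth_cst {N} (f : fn N) : smooth f -> ssmooth (cst f).
Proof. intros H [|n]; [exact H | exact (smooth_const C0)]. Qed.

Lemma ssmooth_sconj {N} (F : ser N) : ssmooth F -> ssmooth (sconj F).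
Proof. intros H n; apply smooth_fconj, H. Qed.

Section StarProduct.
Variables (N : nat) (C : nat -> fn N -> fn N -> fn N).
Hypothesis Hbidiff : forall r, (1 <= r)%nat -> bidiff (C r).

Lemma Cfull_smooth r u v : smooth u -> smooth v -> smooth (Cfull C r u v).
Proof.
  intros Hu Hv; destruct r as [|r]; simpl.
  - apply smooth_fmul; assumption.
  - apply bidiff_smooth; auto; apply Hbidiff; lia.
Qed.

Lemma Cfull_frlin_l r u v w a b : smooth u -> smooth v -> smooth w ->
  forall x, Cfull C r (frlin a b u v) w x = Crlin a b (Cfull C r u w x) (Cfull C r v w x).
Proof.
  intros Hu Hv Hw x; destruct r as [|r]; simpl.
  - unfold fmul; Cx_ring.
  - apply bidiff_frlin_l; auto; apply Hbidiff; lia.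
Qed.

Lemma Cfull_frlin_r r u v w a b : smooth u -> smooth v -> smooth w ->
  forall x, Cfull C r u (frlin a b v w) x = Crlin a b (Cfull C r u v x) (Cfull C r u w x).
Proof.
  intros Hu Hv Hw x; destruct r as [|r]; simpl.
  - unfold fmul; Cx_ring.
  - apply bidiff_frlin_r; auto; apply Hbidiff; lia.
Qed.

(* The zero function is the combination [frlin 0 0] of itself. *)
Lemma Cfull_zero_l r u x : smooth u -> Cfull C r (fun _ => C0) u x = C0.
Proof.
  intro Hu.
  replace (fun _ : pt N => C0) with (frlin 0 0 (fun _ : pt N => C0) (fun _ => C0))
    by (extensionality y; Cx_ring).
  rewrite Cfull_frlin_l by auto using smooth_const. Cx_ring.
Qed.

Lemma Cfull_zero_r r u x : smooth u -> Cfull C r u (fun _ => C0) x = C0.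
Proof.
  intro Hu.
  replace (fun _ : pt N => C0) with (frlin 0 0 (fun _ : pt N => C0) (fun _ => C0))
    by (extensionality y; Cx_ring).
  rewrite Cfull_frlin_r by auto using smooth_const. Cx_ring.
Qed.

Lemma ssmooth_star F G : ssmooth F -> ssmooth G -> ssmooth (star C F G).
Proof.
  intros HF HG n; unfold star.
  apply (smooth_Csum (S n) (fun r x => Cmul (Cpow Ci r)
    (Csum (S (n - r)) (fun a => Cfull C r (F a) (G (n - r - a)%nat) x)))).
  intro r; apply smooth_Cmul_l.
  apply (smooth_Csum _ (fun a => Cfull C r (F a) (G (n - r - a)%nat))).
  intro; apply Cfull_smooth; auto.
Qed.

Lemma star_srlin_l F G H a b : ssmooth F -> ssmooth G -> ssmooth H ->
  star C (srlin a b F G) H = srlin a b (star C F H) (star C G H).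
Proof.
  intros HF HG HH; extensionality n; extensionality x.
  change (srlin a b (star C F H) (star C G H) n x)
    with (Crlin a b (star C F H n x) (star C G H n x)).
  unfold star; rewrite <- Csum_Crlin; apply Csum_ext; intro r.
  rewrite <- Cmul_Crlin, <- Csum_Crlin; f_equal; apply Csum_ext; intro k.
  apply Cfull_frlin_l; auto.
Qed.

Lemma star_srlin_r F G H a b : ssmooth F -> ssmooth G -> ssmooth H ->
  star C F (srlin a b G H) = srlin a b (star C F G) (star C F H).
Proof.
  intros HF HG HH; extensionality n; extensionality x.
  change (srlin a b (star C F G) (star C F H) n x)
    with (Crlin a b (star C F G n x) (star C F H n x)).
  unfold star; rewrite <- Csum_Crlin; apply Csum_ext; intro r.
  rewrite <- Cmul_Crlin, <- Csum_Crlin; f_equal; apply Csum_ext; intro k.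
  apply Cfull_frlin_r; auto.
Qed.

Lemma star_cst_l f G n x : smooth f -> ssmooth G ->
  star C (cst f) G n x = Csum (S n) (fun r => Cmul (Cpow Ci r) (Cfull C r f (G (n - r)%nat) x)).
Proof.
  intros Hf HG; unfold star; apply Csum_ext; intro r; f_equal.
  rewrite Csum_first; [simpl; rewrite Nat.sub_0_r; reflexivity|].
  intros [|k] Hk; [lia | apply Cfull_zero_l; auto].
Qed.

Lemma star_cst_r f G n x : smooth f -> ssmooth G ->
  star C G (cst f) n x = Csum (S n) (fun r => Cmul (Cpow Ci r) (Cfull C r (G (n - r)%nat) f x)).
Proof.
  intros Hf HG; unfold star; apply Csum_ext; intro r; f_equal.
  rewrite Csum_last, Nat.sub_diag; [reflexivity|].
  intros k Hk; destruct (n - r - k)%nat eqn:E; [lia | apply Cfull_zero_r; auto].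
Qed.

End StarProduct.

(** * Relations between the triple products *)

Definition X {N} (m : idx N) : ser N := cst (coord m).

Lemma ssmooth_X {N} (m : idx N) : ssmooth (X m).
Proof. apply ssmooth_cst, smooth_coord. Qed.

Lemma fconj_coord {N} (m : idx N) : fconj (coord m) = coord m.
Proof. extensionality x; unfold fconj, coord; Cx_ring. Qed.

Lemma fconj_mono2 {N} (i j : idx N) : fconj (mono [i; j]) = mono [i; j].
Proof. extensionality x; unfold fconj, mono, fmul, coord, fone; Cx_ring. Qed.

Lemma smooth_mono2 {N} (i j : idx N) : smooth (mono [i; j]).
Proof.
  apply smooth_fmul, smooth_fmul;
    [apply smooth_coord | apply smooth_coord | exact (smooth_const Defs.C1)].
Qed.

Lemma ssub_srlin {N} (F G : ser N) : ssub F G = srlin 1 (-1) F G.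
Proof. extensionality n; extensionality x; unfold ssub, sadd, sopp, srlin; Cx_ring. Qed.

Section Triples.
Variables (N : nat) (C : nat -> fn N -> fn N -> fn N).
Hypothesis Hbidiff : forall r, (1 <= r)%nat -> bidiff (C r).
Hypothesis Hweyl : weyl C.
Hypothesis Hherm : weakly_hermitian C.
Hypothesis Hunit : stable_unity C.

Definition triple (p q r : idx N) : ser N := star C (X p) (star C (X q) (X r)).

Lemma ssmooth_star_X p q : ssmooth (star C (X p) (X q)).
Proof. apply ssmooth_star; auto using ssmooth_X. Qed.

Lemma hermitian_coef k g n x : smooth g ->
  Cconj (Cmul (Cpow Ci n) (Cfull C n (coord k) g x)) =
  Cmul (Cpow Ci n) (Cfull C n (fconj g) (coord k) x).
Proof.
  intro Hg; pose proof (f_equal (fun F => F n x) (Hherm k g Hg)) as E; cbv beta in E.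
  unfold sconj in E.
  rewrite star_cst_l, star_cst_r, !Csum_last, !Nat.sub_diag in E;
    auto using smooth_coord, smooth_fconj, ssmooth_cst;
    intros r Hr; destruct (n - r)%nat eqn:Er; try lia; simpl;
    rewrite ?Cfull_zero_l, ?Cfull_zero_r; auto using smooth_coord, Cmul_C0.
Qed.

Lemma hermitian_series k G : ssmooth G ->
  sconj (star C (X k) G) = star C (sconj G) (X k).
Proof.
  intro HG; extensionality n; extensionality x; unfold sconj at 1, X.
  rewrite star_cst_l, star_cst_r, Cconj_Csum; auto using smooth_coord, ssmooth_sconj.
  apply Csum_ext; intro r; apply hermitian_coef, HG.
Qed.

Lemma weyl_mono2 i j f : smooth f ->
  star C (cst (mono [i; j])) (cst f) =
  srlin (/2) (/2) (star C (X i) (star C (X j) (cst f))) (star C (X j) (star C (X i) (cst f))).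
Proof.
  intro Hf; rewrite Hweyl by (simpl; lia || exact Hf).
  replace (INR (fact (length [i; j]))) with 2 by (simpl; ring).
  extensionality n; extensionality x.
  unfold ssum, sscale, sadd, szero, srlin, X; simpl; Cx_ring.
Qed.

Lemma cst_mono2 i j : cst (mono [i; j]) = srlin (/2) (/2) (star C (X i) (X j)) (star C (X j) (X i)).
Proof.
  destruct (Hunit _ (smooth_mono2 i j)) as [<- _].
  rewrite weyl_mono2 by exact (smooth_const Defs.C1).
  unfold X; rewrite (proj1 (Hunit _ (smooth_coord i))), (proj1 (Hunit _ (smooth_coord j))).
  reflexivity.
Qed.

Lemma star_star_X p q r : star C (star C (X p) (X q)) (X r) = sconj (triple r q p).
Proof.
  unfold triple; rewrite hermitian_series by apply ssmooth_star_X.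
  unfold X; rewrite Hherm, fconj_coord by apply smooth_coord; reflexivity.
Qed.

Lemma triple_sym p q r :
  sadd (triple p q r) (triple q p r) = sconj (sadd (triple r p q) (triple r q p)).
Proof.
  assert (E : srlin (/2) (/2) (triple p q r) (triple q p r) =
              sconj (srlin (/2) (/2) (triple r p q) (triple r q p))).
  { unfold triple; change (X r) with (cst (coord r)).
    rewrite <- weyl_mono2 by apply smooth_coord.
    rewrite <- fconj_mono2 at 1; rewrite <- Hherm by apply smooth_mono2.
    rewrite cst_mono2, star_srlin_r; auto using ssmooth_cst, smooth_coord, ssmooth_star_X. }
  extensionality n; extensionality x.
  pose proof (f_equal (fun F => F n x) E) as En; cbv beta in En.
  apply Cx_eq; [apply (f_equal fst) in En | apply (f_equal snd) in En];
    unfold srlin, frlin, sconj, sadd, Crlin, Cconj, Cadd in *; simpl in *; lra.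
Qed.

Lemma assoc_X p q r : assoc C (X p) (X q) (X r) = ssub (triple p q r) (sconj (triple r q p)).
Proof. unfold assoc; rewrite star_star_X; reflexivity. Qed.

Lemma comm_comm_X p q r :
  comm C (X p) (comm C (X q) (X r)) =
  ssub (ssub (triple p q r) (triple p r q)) (ssub (sconj (triple p r q)) (sconj (triple p q r))).
Proof.
  unfold comm; rewrite !ssub_srlin.
  rewrite star_srlin_l, star_srlin_r, !star_star_X; auto using ssmooth_X, ssmooth_star_X.
Qed.

End Triples.

(** * The algebraic identities *)

Section AlternativeIdentities.
Variables (I : Type) (a : I -> I -> I -> Cx).
Hypothesis a_sym : forall p q r, Cadd (a p q r) (a q p r) = Cconj (Cadd (a r p q) (a r q p)).

Definition assoc_val p q r : Cx := Cadd (a p q r) (Copp (Cconj (a r q p))).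

Definition comm_comm_val p q r : Cx :=
  Cadd (Cadd (a p q r) (Copp (a p r q))) (Copp (Cadd (Cconj (a p r q)) (Copp (Cconj (a p q r))))).

Lemma a_sym_components p q r :
  fst (a p q r) + fst (a q p r) = fst (a r p q) + fst (a r q p) /\
  snd (a p q r) + snd (a q p r) = - (snd (a r p q) + snd (a r q p)).
Proof.
  pose proof (a_sym p q r) as E; split;
    [apply (f_equal fst) in E | apply (f_equal snd) in E]; simpl in E; lra.
Qed.

Lemma assoc_val_swap12 p q r : assoc_val p q r = Copp (assoc_val q p r).
Proof.
  destruct (a_sym_components p q r).
  apply Cx_eq; unfold assoc_val, Cadd, Copp, Cconj; simpl; lra.
Qed.

Lemma assoc_val_swap23 p q r : assoc_val p q r = Copp (assoc_val p r q).
Proof.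
  destruct (a_sym_components q r p).
  apply Cx_eq; unfold assoc_val, Cadd, Copp, Cconj; simpl; lra.
Qed.

Lemma assoc_val_swap13 p q r : assoc_val p q r = Copp (assoc_val r q p).
Proof.
  rewrite (assoc_val_swap12 p q r), (assoc_val_swap23 q p r), (assoc_val_swap12 q r p).
  Cx_ring.
Qed.

Lemma assoc_val_jacobi p q r :
  assoc_val p q r =
  Cmul (Cre (/ 6)) (Cadd (Cadd (comm_comm_val p q r) (comm_comm_val r p q)) (comm_comm_val q r p)).
Proof.
  destruct (a_sym_components p q r), (a_sym_components q p r), (a_sym_components p r q),
    (a_sym_components r p q), (a_sym_components q r p), (a_sym_components r q p).
  apply Cx_eq; unfold assoc_val, comm_comm_val, Cmul, Cadd, Copp, Cconj, Cre; simpl; lra.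
Qed.

End AlternativeIdentities.

Theorem proposition1 (N : nat) (C : nat -> fn N -> fn N -> fn N)
  (Hbidiff : forall r, (1 <= r)%nat -> bidiff (C r))
  (Hweyl : weyl C) (Hherm : weakly_hermitian C) (Hunit : stable_unity C) :
  forall i j k : idx N,
    let X := fun m => cst (coord m) in
    assoc C (X i) (X j) (X k) = sscale (Cre (/ 6)) (jacobiator C (X i) (X j) (X k)) /\
    assoc C (X i) (X j) (X k) = sopp (assoc C (X j) (X i) (X k)) /\
    assoc C (X i) (X j) (X k) = sopp (assoc C (X i) (X k) (X j)) /\
    assoc C (X i) (X j) (X k) = sopp (assoc C (X k) (X j) (X i)).
Proof.
  intros i j k; cbv zeta beta.
  change (cst (coord i)) with (X i); change (cst (coord j)) with (X j);
    change (cst (coord k)) with (X k).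
  unfold jacobiator; rewrite !(assoc_X N C Hbidiff Hherm), !(comm_comm_X N C Hbidiff Hherm).
  assert (Hsym : forall n x p q r,
    Cadd (triple N C p q r n x) (triple N C q p r n x) =
    Cconj (Cadd (triple N C r p q n x) (triple N C r q p n x))).
  { intros n x p q r; exact (f_equal (fun F => F n x) (triple_sym N C Hbidiff Hweyl Hherm Hunit p q r)). }
  repeat split; extensionality n; extensionality x;
    [ exact (assoc_val_jacobi _ _ (Hsym n x) i j k)
    | exact (assoc_val_swap12 _ _ (Hsym n x) i j k)
    | exact (assoc_val_swap23 _ _ (Hsym n x) i j k)
    | exact (assoc_val_swap13 _ _ (Hsym n x) i j k) ].
Qed.
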